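(* For every integer $k \geq 2$ and every $0 < \gamma \leq 1/100$ there exists $n_0$ such that for every $n \geq n_0$ the following holds. Let $H$ be an $n$-vertex $k$-graph with $\delta_{k-1}(H) \geq n/3$, and let $G$ be the $\gamma$-diamond graph of $H$. Then $\delta(G) \geq n/10$.
   Context: $\delta_{k-1}(H)$ is the minimum over $(k-1)$-subsets $S \subseteq V(H)$ of the number of edges containing $S$. For $x, y \in V(H)$, an $(x,y)$-diamond is a pair of edges $e, f$ of $H$ with $|e \cap f| = k-1$, $x \in e\setminus f$, $y \in f \setminus e$. The $\gamma$-diamond graph of an $n$-vertex $k$-graph $H$ is the graph $G$ on $V(H)$ in which $xy \in E(G)$ if and only if $H$ contains at least $\gamma\binom{n}{k-1}$ distinct $(x,y)$-diamonds. $\delta(G)$ is the minimum degree of $G$. *)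

From mathcomp Require Import all_boot all_order all_algebra.
Set Implicit Arguments. Unset Strict Implicit. Unset Printing Implicit Defensive.
Import Order.TTheory GRing.Theory Num.Theory.
Local Open Scope ring_scope.

Definition kgraph (n k : nat) (H : {set {set 'I_n}}) : Prop :=
  forall e, e \in H -> #|e| = k.

Definition codeg (n : nat) (H : {set {set 'I_n}}) (S : {set 'I_n}) : nat :=
  #|[set e in H | S \subset e]|.

Definition min_codeg_ge (n k : nat) (H : {set {set 'I_n}}) (d : rat) : Prop :=
  forall S : {set 'I_n}, #|S| = k.-1 -> d <= (codeg H S)%:R.

Definition diamonds (n k : nat) (H : {set {set 'I_n}}) (x y : 'I_n)
  : {set {set 'I_n} * {set 'I_n}} :=
  [set p | [&& p.1 \in H, p.2 \in H, (#|p.1 :&: p.2| == k.-1)%N,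
              x \in p.1 :\: p.2 & y \in p.2 :\: p.1]].

Definition diamond_adj (n k : nat) (gamma : rat) (H : {set {set 'I_n}})
  (x y : 'I_n) : bool :=
  gamma * ('C(n, k.-1))%:R <= (#|diamonds k H x y|)%:R.

(* degree of x in the gamma-diamond graph (loops impossible: x ∈ e\f, x ∉ f\e) *)
Definition diamond_deg (n k : nat) (gamma : rat) (H : {set {set 'I_n}})
  (x : 'I_n) : nat :=
  #|[set y | (y != x) && diamond_adj k gamma H x y]|.

From mathcomp Require Import all_boot all_order all_algebra.
From mathcomp Require Import zify lra.
Set Implicit Arguments. Unset Strict Implicit. Unset Printing Implicit Defensive.
Import Order.TTheory GRing.Theory Num.Theory.
Local Open Scope ring_scope.

(* Let E_x be the set of edges through x.  Double counting pairs (T, e) with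
   T a (k-2)-set avoiding x and T + x inside e gives |E_x| >= C(n, k-1) / 3.
   For e in E_x, the (k-1)-set e - x lies in at least n/3 - 1 edges f <> e, and
   each of them forms an (x, y)-diamond with e, y being the vertex of f - e; so x
   has at least |E_x| (n/3 - 1) diamonds in total.  Conversely, a diamond is
   determined by x, y and its edge e, so there are at most |E_x| of them for each
   y, and fewer than gamma C(n, k-1) <= 3 gamma |E_x| for a non-neighbour y.
   Hence n/3 - 1 <= deg x + 3 gamma n, and deg x >= (1/3 - 3 gamma) n - 1 >= n/10
   as soon as n >= 5. *)

Lemma card_set_in_sum (I : finType) (A : {set I}) (P : pred I) :
  #|[set i in A | P i]| = (\sum_(i in A) P i)%N.
Proof. by rewrite -sum1dep_card big_mkcondr /=; apply: eq_bigr => i _; case: (P i). Qed.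

Lemma double_count (I J : finType) (A : {set I}) (B : {set J}) (R : I -> J -> bool) :
  (\sum_(i in A) #|[set j in B | R i j]| = \sum_(j in B) #|[set i in A | R i j]|)%N.
Proof.
under eq_bigr do rewrite card_set_in_sum.
under [RHS]eq_bigr do rewrite card_set_in_sum.
exact: exchange_big.
Qed.

Definition edges_at (n : nat) (H : {set {set 'I_n}}) (x : 'I_n) : {set {set 'I_n}} :=
  [set e in H | x \in e].

Lemma diamonds_xx n k (H : {set {set 'I_n}}) x : diamonds k H x x = set0.
Proof.
apply/setP => p; rewrite !inE.
by case: (x \in p.1); case: (x \in p.2); rewrite /= ?andbF.
Qed.

Section Diamonds.

Variables (n k : nat) (H : {set {set 'I_n}}).
Hypothesis uniform_H : kgraph k H.

Lemma card_edgeD1 e x : e \in H -> x \in e -> #|e :\ x| = k.-1.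
Proof. by move=> He xe; rewrite -(uniform_H He) (cardsD1 x e) xe. Qed.

Lemma diamond_shape x y e f :
  (e, f) \in diamonds k H x y -> e \in edges_at H x /\ f = e :\ x :|: [set y].
Proof.
rewrite inE /= => /and5P [He Hf /eqP cardI]; rewrite !inE => /andP[xNf xe] /andP[yNe yf].
split; first exact/andP.
have fIe : f :&: e = e :\ x.
  apply/eqP; rewrite eqEcard setIC cardI (card_edgeD1 He xe) leqnn andbT.
  apply/subsetP => z; rewrite !inE => /andP[ze zf]; rewrite ze andbT.
  by apply: contraNneq xNf => <-.
have fDe : f :\: e = [set y].
  apply/eqP; rewrite eq_sym eqEcard cards1 sub1set !inE yNe yf /=.
  by rewrite cardsD fIe (card_edgeD1 He xe) (uniform_H Hf); lia.
by rewrite -fIe -fDe setID.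
Qed.

Lemma card_diamonds_le x y : (#|diamonds k H x y| <= #|edges_at H x|)%N.
Proof.
apply: leq_trans (leq_imset_card (fun e => (e, e :\ x :|: [set y])) _).
apply/subset_leq_card/subsetP => -[e f] /diamond_shape [Ex ->].
exact: imset_f.
Qed.

Lemma diamond_of_common_face x e f : e \in H -> x \in e -> f \in H ->
  e :\ x \subset f -> f != e -> exists y, (e, f) \in diamonds k H x y.
Proof.
move=> He xe Hf exf fNe.
have edge_sub_eq A B : A \in H -> B \in H -> A \subset B -> A = B.
  by move=> HA HB AB; apply/eqP; rewrite eqEcard AB (uniform_H HA) (uniform_H HB) leqnn.
have xNf : x \notin f.
  apply: contra fNe => xf; apply/eqP/esym/edge_sub_eq => //.
  by rewrite -(setD1K xe) subUset sub1set xf.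
have /subsetPn [y yf yNe] : ~~ (f \subset e).
  by apply: contra fNe => fe; apply/eqP/edge_sub_eq.
have eIf : e :&: f = e :\ x.
  apply/setP => z; rewrite !inE.
  case: (z =P x) => [-> | /eqP zNx]; first by rewrite (negbTE xNf) andbF.
  by case ze: (z \in e); rewrite //= (subsetP exf) // !inE zNx ze.
by exists y; rewrite inE /= He Hf eIf (card_edgeD1 He xe) !inE xNf xe yNe yf eqxx.
Qed.

Lemma codeg_double_count x d : (1 < k)%N -> min_codeg_ge k H d ->
  d * 'C(n.-1, k.-2)%:R <= (k.-1 * #|edges_at H x|)%:R.
Proof.
move=> k_gt1 codeg_H.
have k1E : k.-1 = (k.-2).+1 by case: k k_gt1 => [|[]].
pose Tx := [set T : {set 'I_n} | T \subset [set~ x] & #|T| == k.-2].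
have card_Tx : #|Tx| = 'C(n.-1, k.-2) by rewrite cards_draws cardsC1 card_ord.
have card_subsets_in_edge e : e \in edges_at H x -> #|[set T in Tx | T \subset e]| = k.-1.
  rewrite inE => /andP[He xe].
  have -> : [set T in Tx | T \subset e] =
            [set T : {set 'I_n} | T \subset e :\ x & #|T| == k.-2].
    by apply/setP => T; rewrite !inE setDE subsetI andbC andbA.
  by rewrite cards_draws (card_edgeD1 He xe) k1E binSn.
have codeg_over T : T \in Tx -> d <= #|[set e in edges_at H x | T \subset e]|%:R.
  rewrite inE => /andP[TNx /eqP cardT].
  have -> : [set e in edges_at H x | T \subset e] = [set e in H | x |: T \subset e].
    by apply/setP => e; rewrite !inE subUset sub1set andbA.
  apply: codeg_H; rewrite cardsU1 cardT k1E.
  suff -> : x \notin T by [].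
  by apply: contraL TNx => xT; apply/subsetPn; exists x; rewrite // !inE eqxx.
apply: le_trans (_ : \sum_(T in Tx) #|[set e in edges_at H x | T \subset e]|%:R <= _).
  by rewrite -card_Tx mulr_natr -sumr_const; exact: ler_sum.
by rewrite -natr_sum double_count (eq_bigr _ card_subsets_in_edge) sum_nat_const mulnC.
Qed.

Lemma card_edges_at_ge x d : (1 < k)%N -> min_codeg_ge k H d ->
  d * 'C(n, k.-1)%:R <= n%:R * #|edges_at H x|%:R.
Proof.
move=> k_gt1 codeg_H; have := codeg_double_count x k_gt1 codeg_H.
have k1E : k.-1 = (k.-2).+1 by case: k k_gt1 => [|[]].
have k1_gt0 : 0 < k.-1%:R :> rat by rewrite ltr0n k1E.
have binE : n%:R * 'C(n.-1, k.-2)%:R = k.-1%:R * 'C(n, k.-1)%:R :> rat.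
  by rewrite -!natrM k1E mul_bin_diag.
rewrite natrM => double_count_x; rewrite -(ler_pM2l k1_gt0).
rewrite mulrCA -binE mulrCA [X in _ <= X]mulrCA.
exact: ler_wpM2l.
Qed.

Lemma sum_card_diamonds_ge x d : min_codeg_ge k H d ->
  #|edges_at H x|%:R * (d - 1) <= (\sum_y #|diamonds k H x y|)%:R.
Proof.
move=> codeg_H.
pose nbrs e := [set f in H | (e :\ x \subset f) && (f != e)].
have sum_diamondsE : (\sum_y #|diamonds k H x y| =
    \sum_e \sum_f #|[set y | (e, f) \in diamonds k H x y]|)%N.
  under eq_bigr do rewrite -sum1_card big_mkcond.
  rewrite exchange_big [RHS]pair_big /=; apply: eq_bigr => -[e f] _.
  by rewrite -sum1dep_card [RHS]big_mkcond.
have card_nbrs_ge e : e \in edges_at H x -> d - 1 <= #|nbrs e|%:R.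
  rewrite inE => /andP[He xe].
  have := codeg_H _ (card_edgeD1 He xe); rewrite /codeg.
  have -> : nbrs e = [set f in H | e :\ x \subset f] :\ e.
    by apply/setP => f; rewrite !inE andbA andbC.
  rewrite (cardsD1 e [set f in H | e :\ x \subset f]) natrD.
  by case: (_ \in _) => /=; lra.
have card_nbrs_le e : e \in edges_at H x ->
    (#|nbrs e| <= \sum_f #|[set y | (e, f) \in diamonds k H x y]|)%N.
  rewrite inE => /andP[He xe]; rewrite -sum1_card big_mkcond /=; apply: leq_sum => f _.
  case: ifP => // /[!inE] /andP[Hf /andP[exf fNe]].
  have [y Dy] := diamond_of_common_face He xe Hf exf fNe.
  by rewrite card_gt0; apply/set0Pn; exists y; rewrite inE.
rewrite sum_diamondsE natr_sum [X in _ <= X](bigID (mem (edges_at H x))) /=.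
rewrite -[X in X <= _]addr0 lerD ?sumr_ge0 // mulrC mulr_natr -sumr_const.
apply: ler_sum => e Ex; apply: le_trans (card_nbrs_ge e Ex) _.
by rewrite ler_nat card_nbrs_le.
Qed.

Lemma sum_card_diamonds_le x gamma : 0 <= gamma ->
  (\sum_y #|diamonds k H x y|)%:R <=
    (diamond_deg k gamma H x * #|edges_at H x|)%:R + n%:R * (gamma * 'C(n, k.-1)%:R).
Proof.
move=> gamma_ge0; set N := [set y | (y != x) && diamond_adj k gamma H x y].
have gC_ge0 : 0 <= gamma * 'C(n, k.-1)%:R by rewrite mulr_ge0.
rewrite natr_sum (bigID (mem N)) /=; apply: lerD.
  rewrite natrM mulr_natl -sumr_const; apply: ler_sum => y _.
  by rewrite ler_nat card_diamonds_le.
apply: le_trans (_ : \sum_(y < n) gamma * 'C(n, k.-1)%:R <= _).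
  rewrite big_mkcond /=; apply: ler_sum => y _; case: ifP => //.
  rewrite inE negb_and negbK => /orP[/eqP -> | notadj]; first by rewrite diamonds_xx cards0.
  by rewrite /diamond_adj -ltNge in notadj; exact: ltW.
by rewrite sumr_const card_ord mulr_natl.
Qed.

End Diamonds.

Theorem lemma7p1 (k : nat) (gamma : rat) :
  (2 <= k)%N -> 0 < gamma -> gamma <= 1 / 100 ->
  exists n0 : nat, forall (n : nat), (n0 <= n)%N ->
    forall H : {set {set 'I_n}},
      kgraph k H ->
      min_codeg_ge k H (n%:R / 3) ->
      forall x : 'I_n, n%:R / 10 <= (diamond_deg k gamma H x)%:R :> rat.
Proof.
move=> k_gt1 gamma_gt0 gamma_small; exists (k + 5)%N => n n_large H uniform_H codeg_H x.
have := card_edges_at_ge uniform_H x k_gt1 codeg_H.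
have := sum_card_diamonds_ge uniform_H x codeg_H.
have := sum_card_diamonds_le uniform_H x (ltW gamma_gt0).
have n_ge5 : 5%:R <= n%:R :> rat by rewrite ler_nat; lia.
have C_gt0 : 0 < 'C(n, k.-1)%:R :> rat by rewrite ltr0n bin_gt0; lia.
rewrite natrM; set E := #|edges_at H x|%:R; set C := 'C(n, k.-1)%:R.
set S := (\sum_y _)%:R; set D := (diamond_deg k gamma H x)%:R => S_le S_ge E_ge.
have C_le3E : C <= 3 * E.
  by rewrite -(@ler_pM2l _ n%:R) ?(lt_le_trans _ n_ge5) //; lra.
have E_gt0 : 0 < E by lra.
have gC_le : gamma * C <= 3 / 100 * E by nra.
have ngC_le : n%:R * (gamma * C) <= n%:R * (3 / 100 * E) by rewrite ler_wpM2l.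
suff : n%:R / 3 - 1 <= D + 3 / 100 * n%:R by lra.
by rewrite -(ler_pM2l E_gt0); nra.
Qed.
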